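(* Let $L,M,N$ be Lie superalgebras such that (i) $L$ and $N$ act compatibly on one another, and $M$ and $N$ act compatibly on one another; (ii) ${}^{l}({}^{m}n)=(-1)^{|l||m|}\,{}^{m}({}^{l}n)$ for all homogeneous $l\in L$, $m\in M$, $n\in N$; (iii) the canonical homomorphisms $[L,N]^{N}\otimes M\to N\otimes M$ and $[M,N]^{N}\otimes L\to N\otimes L$ are trivial. Then $L\oplus M$ acts on $N$ by ${}^{(l,m)}n={}^{l}n+{}^{m}n$, $N$ acts on $L\oplus M$ by ${}^{n}(l,m)=({}^{n}l,{}^{n}m)$, and with these actions there is an isomorphism of Lie superalgebras \[(L\oplus M)\otimes N\cong (L\otimes N)\oplus(M\otimes N),\quad (l,m)\otimes n\mapsto (l\otimes n,\,m\otimes n).\]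
   Context: All algebras are over a field $\mathbb{F}$ of characteristic $\neq 2,3$. An action of a Lie superalgebra $P$ on a Lie superalgebra $M$ is an even bilinear map $(p,m)\mapsto {}^{p}m$ with ${}^{[p,p']}m={}^{p}({}^{p'}m)-(-1)^{|p||p'|}{}^{p'}({}^{p}m)$ and ${}^{p}[m,m']=[{}^{p}m,m']+(-1)^{|p||m|}[m,{}^{p}m']$. Actions of $M$ and $N$ on each other are compatible if ${}^{({}^{n}m)}n'=-(-1)^{|m||n|}[{}^{m}n,n']$ and ${}^{({}^{m}n)}m'=-(-1)^{|m||n|}[{}^{n}m,m']$ for all homogeneous $m,m'\in M$, $n,n'\in N$. Given mutual actions, the non-abelian tensor product $M\otimes N$ is the Lie superalgebra generated by symbols $m\otimes n$ (homogeneous $m,n$, degree $|m|+|n|$) subject to: $\lambda(m\otimes n)=\lambda m\otimes n=m\otimes\lambda n$; additivity in each variable (for elements of the same degree); $[m,m']\otimes n=m\otimes{}^{m'}n-(-1)^{|m||m'|}m'\otimes{}^{m}n$; $m\otimes[n,n']=(-1)^{|n'|(|m|+|n|)}{}^{n'}m\otimes n-(-1)^{|m||n|}{}^{n}m\otimes n'$; $[m\otimes n,m'\otimes n']=-(-1)^{|m||n|}\,{}^{n}m\otimes{}^{m'}n'$. For an action of $L$ on $N$, $[L,N]^{N}$ denotes the graded ideal of $N$ spanned by the elements ${}^{l}n$. *)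

From HB Require Import structures.
From mathcomp Require Import all_boot all_order all_algebra.
Set Implicit Arguments. Unset Strict Implicit. Unset Printing Implicit Defensive.
Import GRing.Theory.
Local Open Scope ring_scope.

(* A (candidate) Lie superalgebra over F: an F-vector space, a predicate
   "homogeneous of parity b" (b = false : even, b = true : odd), and a bracket. *)
Record sLie (F : fieldType) := SLie {
  sl_car :> lmodType F;
  sl_hom : bool -> sl_car -> Prop;
  sl_br : sl_car -> sl_car -> sl_car }.

Arguments sl_hom {F} s b x.
Arguments sl_br {F} s x y.

Section Defs.
Variable F : fieldType.

Definition sgn (a b : bool) : F := if a && b then -1 else 1.

Definition linear_map (U V : lmodType F) (f : U -> V) : Prop :=
  forall (k : F) (x y : U), f (k *: x + y) = k *: f x + f y.

Definition bilinear_map (U V W : lmodType F) (f : U -> V -> W) : Prop :=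
  (forall v, linear_map (fun u => f u v)) /\ (forall u, linear_map (f u)).

Definition is_sLie (A : sLie F) : Prop :=
      (forall b, sl_hom A b 0) /\
      (forall b (k : F) (x y : A), sl_hom A b x -> sl_hom A b y ->
          sl_hom A b (k *: x + y)) /\
      (forall x : A, exists x0 x1, [/\ sl_hom A false x0, sl_hom A true x1
                                    & x = x0 + x1]) /\
      (forall x : A, sl_hom A false x -> sl_hom A true x -> x = 0) /\
      bilinear_map (sl_br A) /\
      (forall a b (x y : A), sl_hom A a x -> sl_hom A b y ->
          sl_hom A (a (+) b) (sl_br A x y)) /\
      (forall a b (x y : A), sl_hom A a x -> sl_hom A b y ->
          sl_br A x y = - (sgn a b *: sl_br A y x)) /\
      (forall a b c (x y z : A), sl_hom A a x -> sl_hom A b y -> sl_hom A c z ->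
          sgn a c *: sl_br A x (sl_br A y z) + sgn b a *: sl_br A y (sl_br A z x)
          + sgn c b *: sl_br A z (sl_br A x y) = 0).

Definition is_sLie_hom (A B : sLie F) (f : A -> B) : Prop :=
  [/\ linear_map f,
      (forall b x, sl_hom A b x -> sl_hom B b (f x))
    & (forall x y, f (sl_br A x y) = sl_br B (f x) (f y))].

Definition is_sLie_iso (A B : sLie F) (f : A -> B) : Prop :=
  is_sLie_hom f /\ bijective f.

Definition is_action (P M : sLie F) (act : P -> M -> M) : Prop :=
  [/\ bilinear_map act,
      (forall a b p m, sl_hom P a p -> sl_hom M b m -> sl_hom M (a (+) b) (act p m)),
      (forall a a' p p' m, sl_hom P a p -> sl_hom P a' p' ->
          act (sl_br P p p') m = act p (act p' m) - sgn a a' *: act p' (act p m))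
    & (forall a b p m m', sl_hom P a p -> sl_hom M b m ->
          act p (sl_br M m m') = sl_br M (act p m) m' + sgn a b *: sl_br M m (act p m'))].

Definition compatible (M N : sLie F) (actMN : M -> N -> N) (actNM : N -> M -> M) : Prop :=
  forall a b (m m' : M) (n n' : N), sl_hom M a m -> sl_hom N b n ->
    actMN (actNM n m) n' = - (sgn a b *: sl_br N (actMN m n) n')
 /\ actNM (actMN m n) m' = - (sgn a b *: sl_br M (actNM n m) m').

(* The defining relations of the non-abelian tensor product, satisfied by a
   map t : M -> N -> T (only its values on homogeneous pairs matter). *)
Definition tensor_rels (M N : sLie F) (actMN : M -> N -> N) (actNM : N -> M -> M)
    (T : sLie F) (t : M -> N -> T) : Prop :=
      (forall a b m n, sl_hom M a m -> sl_hom N b n -> sl_hom T (a (+) b) (t m n)) /\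
      (forall a b (k : F) m n, sl_hom M a m -> sl_hom N b n ->
          t (k *: m) n = k *: t m n /\ t m (k *: n) = k *: t m n) /\
      (forall a b m m' n, sl_hom M a m -> sl_hom M a m' -> sl_hom N b n ->
          t (m + m') n = t m n + t m' n) /\
      (forall a b m n n', sl_hom M a m -> sl_hom N b n -> sl_hom N b n' ->
          t m (n + n') = t m n + t m n') /\
      (forall a a' b m m' n, sl_hom M a m -> sl_hom M a' m' -> sl_hom N b n ->
          t (sl_br M m m') n = t m (actMN m' n) - sgn a a' *: t m' (actMN m n)) /\
      (forall a b c m n n', sl_hom M a m -> sl_hom N b n -> sl_hom N c n' ->
          t m (sl_br N n n') = sgn c (a (+) b) *: t (actNM n' m) n
                               - sgn a b *: t (actNM n m) n') /\
      (forall a b a' b' m n m' n', sl_hom M a m -> sl_hom N b n ->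
          sl_hom M a' m' -> sl_hom N b' n' ->
          sl_br T (t m n) (t m' n') = - (sgn a b *: t (actNM n m) (actMN m' n'))).

(* (T, t) is the non-abelian tensor product M (x) N: the Lie superalgebra
   generated by the symbols t m n subject to the relations above, i.e. it is
   initial among Lie superalgebras with such a map. *)
Definition is_tensor (M N : sLie F) (actMN : M -> N -> N) (actNM : N -> M -> M)
    (T : sLie F) (t : M -> N -> T) : Prop :=
  [/\ is_sLie T, tensor_rels actMN actNM t
    & forall (T' : sLie F) (t' : M -> N -> T'), is_sLie T' ->
        tensor_rels actMN actNM t' ->
        exists f : T -> T',
          [/\ is_sLie_hom f,
              (forall a b m n, sl_hom M a m -> sl_hom N b n -> f (t m n) = t' m n)
            & forall g : T -> T', is_sLie_hom g ->
                (forall a b m n, sl_hom M a m -> sl_hom N b n -> g (t m n) = t' m n) ->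
                forall x, g x = f x]].

Definition act_span (L N : sLie F) (act : L -> N -> N) (x : N) : Prop :=
  exists s : seq (F * L * N), x = \sum_(p <- s) p.1.1 *: act p.1.2 p.2.

Definition sLie_sum (A B : sLie F) : sLie F :=
  @SLie F (A * B)%type
    (fun b x => sl_hom A b x.1 /\ sl_hom B b x.2)
    (fun x y => (sl_br A x.1 y.1, sl_br B x.2 y.2)).

Definition sum_act_l (L M N : sLie F) (actLN : L -> N -> N) (actMN : M -> N -> N)
    (lm : sLie_sum L M) (n : N) : N := actLN lm.1 n + actMN lm.2 n.

Definition sum_act_r (L M N : sLie F) (actNL : N -> L -> L) (actNM : N -> M -> M)
    (n : N) (lm : sLie_sum L M) : sLie_sum L M := (actNL n lm.1, actNM n lm.2).

End Defs.

(* The non-abelian tensor product is given by its universal property, so the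
   proof is a diagram chase with universal maps.  Write P = L (+) M.
   - Lie superalgebra bookkeeping: signs, linearity, super Jacobi, direct sums.
   - Every tensor product M (x) N is generated, as a Lie superalgebra, by the
     symbols m (x) n (initiality against the subalgebra they generate); this
     gives an induction principle [tensor_ind] and uniqueness of maps out of
     it [tensor_uniq].
   - N (x) M maps onto M (x) N by n (x) m |-> -(-1)^{|n||m|} m (x) n, so by
     hypothesis (iii) the cross terms l (x) ^m n and m (x) ^l n vanish.
   - Defining relations transport along a Lie homomorphism compatible with the
     actions [rels_along]; this yields maps L (x) N -> P (x) N,
     M (x) N -> P (x) N and P (x) N -> (L (x) N) (+) (M (x) N).
   - The images of L (x) N and M (x) N in P (x) N commute (checked on
     generators, then by induction), so they assemble into an inverse map. *)
From HB Require Import structures.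
From mathcomp Require Import all_boot all_order all_algebra.
From mathcomp Require Import boolp ring.
Set Implicit Arguments. Unset Strict Implicit. Unset Printing Implicit Defensive.
Import GRing.Theory.
Local Open Scope ring_scope.

Section Basics.
Variable F : fieldType.
Local Notation s := (sgn F).

Lemma sgnC a b : s a b = s b a.
Proof. by case: a; case: b. Qed.

Lemma sgnK a b : s a b * s a b = 1.
Proof. by case: a; case: b; rewrite /sgn /= ?mulr1 ?mulrNN ?mulr1. Qed.

Lemma sgnKZ (V : lmodType F) a b (v : V) : s a b *: (s a b *: v) = v.
Proof. by rewrite scalerA sgnK scale1r. Qed.

Lemma sgnZ_eq0 (V : lmodType F) a b (v : V) : s a b *: v = 0 -> v = 0.
Proof. by move=> h; rewrite -(sgnKZ a b v) h scaler0. Qed.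

Section Linear.
Variables (U V : lmodType F) (f : U -> V).
Hypothesis hf : linear_map f.

Lemma linD x y : f (x + y) = f x + f y.
Proof. by have := hf 1 x y; rewrite !scale1r. Qed.
Lemma lin0 : f 0 = 0.
Proof. by have := linD 0 0; rewrite addr0 => /eqP; rewrite -subr_eq0 opprD addrA subrr add0r oppr_eq0 => /eqP. Qed.
Lemma linZ k x : f (k *: x) = k *: f x.
Proof. by have := hf k x 0; rewrite !addr0 lin0 addr0. Qed.
Lemma linN x : f (- x) = - f x.
Proof. by rewrite -scaleN1r linZ scaleN1r. Qed.
End Linear.

Section LieSuperalgebra.
Variable A : sLie F.
Hypothesis HA : is_sLie A.
Local Notation br := (sl_br A).
Local Notation hom := (sl_hom A).

Lemma hom0 b : hom b 0.
Proof. by case: HA. Qed.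
Lemma homL b k (x y : A) : hom b x -> hom b y -> hom b (k *: x + y).
Proof. by case: HA => _ [h _]; apply: h. Qed.
Lemma homD b (x y : A) : hom b x -> hom b y -> hom b (x + y).
Proof. by move=> hx hy; have := homL 1 hx hy; rewrite scale1r. Qed.
Lemma homZ b k (x : A) : hom b x -> hom b (k *: x).
Proof. by move=> hx; have := homL k hx (hom0 b); rewrite addr0. Qed.
Lemma homN b (x : A) : hom b x -> hom b (- x).
Proof. by move=> hx; rewrite -scaleN1r; apply: homZ. Qed.
Lemma decomp (x : A) : exists x0 x1, [/\ hom false x0, hom true x1 & x = x0 + x1].
Proof. by case: HA => _ [_ [h _]]; apply: h. Qed.
Lemma hom01 (x : A) : hom false x -> hom true x -> x = 0.
Proof. by case: HA => _ [_ [_ [h _]]]; apply: h. Qed.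

Lemma br_bil : bilinear_map br.
Proof. by case: HA => _ [_ [_ [_ [h _]]]]. Qed.
Lemma brDl x y z : br (x + y) z = br x z + br y z.
Proof. by apply: (linD (f := fun u => br u z)); case: br_bil. Qed.
Lemma brDr x y z : br z (x + y) = br z x + br z y.
Proof. by apply: linD; case: br_bil. Qed.
Lemma brZl k x z : br (k *: x) z = k *: br x z.
Proof. by apply: (linZ (f := fun u => br u z)); case: br_bil. Qed.
Lemma brZr k x z : br z (k *: x) = k *: br z x.
Proof. by apply: linZ; case: br_bil. Qed.
Lemma br0l z : br 0 z = 0.
Proof. by apply: (lin0 (f := fun u => br u z)); case: br_bil. Qed.
Lemma br0r z : br z 0 = 0.
Proof. by apply: lin0; case: br_bil. Qed.
Lemma brNl x z : br (- x) z = - br x z.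
Proof. by apply: (linN (f := fun u => br u z)); case: br_bil. Qed.
Lemma brNr x z : br z (- x) = - br z x.
Proof. by apply: linN; case: br_bil. Qed.

Lemma br_hom a b x y : hom a x -> hom b y -> hom (a (+) b) (br x y).
Proof. by case: HA => _ [_ [_ [_ [_ [h _]]]]]; apply: h. Qed.
Lemma br_skew a b x y : hom a x -> hom b y -> br x y = - (s a b *: br y x).
Proof. by case: HA => _ [_ [_ [_ [_ [_ [h _]]]]]]; apply: h. Qed.
Lemma jacobi a b c x y z : hom a x -> hom b y -> hom c z ->
  s a c *: br x (br y z) + s b a *: br y (br z x) + s c b *: br z (br x y) = 0.
Proof. by case: HA => _ [_ [_ [_ [_ [_ [_ h]]]]]]; apply: h. Qed.

Lemma br_eq0_swap a b x y : hom a x -> hom b y -> br x y = 0 -> br y x = 0.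
Proof. by move=> hx hy e; rewrite (br_skew hy hx) e scaler0 oppr0. Qed.

Lemma centralizer_br a b c x y z : hom a x -> hom b y -> hom c z ->
  br x z = 0 -> br y z = 0 -> br (br x y) z = 0.
Proof.
move=> hx hy hz e1 e2; apply: (br_eq0_swap hz (br_hom hx hy)).
have := jacobi hx hy hz.
rewrite e2 br0r scaler0 add0r (br_skew hz hx) e1 scaler0 oppr0 br0r scaler0 add0r.
exact: sgnZ_eq0.
Qed.
End LieSuperalgebra.

Lemma pairE (A B : Type) (x y : A * B) : x.1 = y.1 -> x.2 = y.2 -> x = y.
Proof. by case: x; case: y => /= ? ? ? ? -> ->. Qed.

Lemma sum_Lie (A B : sLie F) : is_sLie A -> is_sLie B -> is_sLie (sLie_sum A B).
Proof.
move=> HA HB.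
split; first by move=> b; split; [exact (hom0 HA b)|exact (hom0 HB b)].
split; first by move=> b k x y [hx1 hx2] [hy1 hy2]; split; [exact (homL HA k hx1 hy1)|exact (homL HB k hx2 hy2)].
split.
  move=> [x y]; have [x0 [x1 [h0 h1 ex]]] := decomp HA x.
  have [y0 [y1 [k0 k1 ey]]] := decomp HB y.
  by exists (x0, y0), (x1, y1); split => //; apply: pairE.
split; first by move=> x [h0 k0] [h1 k1]; apply: pairE; [exact (hom01 HA h0 h1)|exact (hom01 HB k0 k1)].
split.
  split=> [v|u] k x y; apply: pairE => /=.
  - by rewrite (brDl HA) (brZl HA).
  - by rewrite (brDl HB) (brZl HB).
  - by rewrite (brDr HA) (brZr HA).
  - by rewrite (brDr HB) (brZr HB).
split; first by move=> a b x y [hx1 hx2] [hy1 hy2]; split; [exact (br_hom HA hx1 hy1)|exact (br_hom HB hx2 hy2)].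
split; first by move=> a b x y [hx1 hx2] [hy1 hy2]; apply: pairE; [exact (br_skew HA hx1 hy1)|exact (br_skew HB hx2 hy2)].
move=> a b c x y z [hx1 hx2] [hy1 hy2] [hz1 hz2]; apply: pairE.
- exact (jacobi HA hx1 hy1 hz1).
- exact (jacobi HB hx2 hy2 hz2).
Qed.

Lemma id_hom (A : sLie F) : is_sLie_hom (fun x : A => x).
Proof. by split. Qed.

Lemma comp_hom (A B C : sLie F) (f : A -> B) (g : B -> C) :
  is_sLie_hom f -> is_sLie_hom g -> is_sLie_hom (fun x => g (f x)).
Proof.
case=> lf pf bf [lg pg bg]; split.
- by move=> k x y; rewrite lf lg.
- by move=> b x hx; apply/pg/pf.
- by move=> x y; rewrite bf bg.
Qed.

Lemma inl_hom (A B : sLie F) : is_sLie B -> is_sLie_hom (fun x : A => (x, 0) : sLie_sum A B).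
Proof.
move=> HB; split.
- by move=> k x y; apply: pairE => //=; rewrite scaler0 addr0.
- by move=> b x hx; split => //; exact (hom0 HB b).
- by move=> x y; apply: pairE => //=; rewrite (br0l HB).
Qed.

Lemma inr_hom (A B : sLie F) : is_sLie A -> is_sLie_hom (fun x : B => (0, x) : sLie_sum A B).
Proof.
move=> HA; split.
- by move=> k x y; apply: pairE => //=; rewrite scaler0 addr0.
- by move=> b x hx; split => //; exact (hom0 HA b).
- by move=> x y; apply: pairE => //=; rewrite (br0l HA).
Qed.

Lemma fst_hom (A B : sLie F) : is_sLie_hom (fun x : sLie_sum A B => x.1).
Proof. by split => // b x []. Qed.

Lemma snd_hom (A B : sLie F) : is_sLie_hom (fun x : sLie_sum A B => x.2).
Proof. by split => // b x []. Qed.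

Lemma sum_hom (A B T : sLie F) (g1 : A -> T) (g2 : B -> T) : is_sLie T ->
  is_sLie_hom g1 -> is_sLie_hom g2 ->
  (forall x y, sl_br T (g1 x) (g2 y) = 0) -> (forall x y, sl_br T (g2 y) (g1 x) = 0) ->
  is_sLie_hom (fun p : sLie_sum A B => g1 p.1 + g2 p.2).
Proof.
move=> HT [lg1 pg1 bg1] [lg2 pg2 bg2] c12 c21; split.
- by move=> k x y; rewrite /= lg1 lg2 scalerDr addrACA.
- by move=> b x [h1 h2]; exact (homD HT (pg1 _ _ h1) (pg2 _ _ h2)).
- by move=> x y; rewrite /= bg1 bg2 !(brDl HT, brDr HT) c12 c21 add0r addr0.
Qed.
End Basics.

Section TensorRelations.
Variable F : fieldType.
Local Notation s := (sgn F).
Variables M N T : sLie F.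
Variables (actMN : M -> N -> N) (actNM : N -> M -> M) (t : M -> N -> T).
Hypothesis Ht : tensor_rels actMN actNM t.

Lemma t_hom a b m n : sl_hom M a m -> sl_hom N b n -> sl_hom T (a (+) b) (t m n).
Proof. by case: Ht => h _; apply: h. Qed.
Lemma t_Zl a b k m n : sl_hom M a m -> sl_hom N b n -> t (k *: m) n = k *: t m n.
Proof. by case: Ht => _ [h _] hm hn; case: (h a b k m n hm hn). Qed.
Lemma t_Zr a b k m n : sl_hom M a m -> sl_hom N b n -> t m (k *: n) = k *: t m n.
Proof. by case: Ht => _ [h _] hm hn; case: (h a b k m n hm hn). Qed.
Lemma t_Dl a b m m' n : sl_hom M a m -> sl_hom M a m' -> sl_hom N b n ->
  t (m + m') n = t m n + t m' n.
Proof. by case: Ht => _ [_ [h _]]; apply: h. Qed.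
Lemma t_Dr a b m n n' : sl_hom M a m -> sl_hom N b n -> sl_hom N b n' ->
  t m (n + n') = t m n + t m n'.
Proof. by case: Ht => _ [_ [_ [h _]]]; apply: h. Qed.
Lemma t_brl a a' b m m' n : sl_hom M a m -> sl_hom M a' m' -> sl_hom N b n ->
  t (sl_br M m m') n = t m (actMN m' n) - s a a' *: t m' (actMN m n).
Proof. by case: Ht => _ [_ [_ [_ [h _]]]]; apply: h. Qed.
Lemma t_brr a b c m n n' : sl_hom M a m -> sl_hom N b n -> sl_hom N c n' ->
  t m (sl_br N n n') = s c (a (+) b) *: t (actNM n' m) n - s a b *: t (actNM n m) n'.
Proof. by case: Ht => _ [_ [_ [_ [_ [h _]]]]]; apply: h. Qed.
Lemma t_br a b a' b' m n m' n' : sl_hom M a m -> sl_hom N b n ->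
  sl_hom M a' m' -> sl_hom N b' n' ->
  sl_br T (t m n) (t m' n') = - (s a b *: t (actNM n m) (actMN m' n')).
Proof. by case: Ht => _ [_ [_ [_ [_ [_ h]]]]]; apply: h. Qed.

Lemma rels_comp (T' : sLie F) (h : T -> T') : is_sLie_hom h ->
  tensor_rels actMN actNM (fun m n => h (t m n)).
Proof.
case=> lh ph bh.
have hZ := linZ lh; have hD := linD lh; have hN := linN lh.
split; first by move=> a b m n hm hn; apply/ph/t_hom.
split; first by move=> a b k m n hm hn; rewrite (t_Zl k hm hn) (t_Zr k hm hn) hZ.
split; first by move=> a b m m' n hm hm' hn; rewrite (t_Dl hm hm' hn) hD.
split; first by move=> a b m n n' hm hn hn'; rewrite (t_Dr hm hn hn') hD.
split; first by move=> a a' b m m' n hm hm' hn; rewrite (t_brl hm hm' hn) hD hN hZ.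
split; first by move=> a b c m n n' hm hn hn'; rewrite (t_brr hm hn hn') hD hN !hZ.
by move=> a b a' b' m n m' n' hm hn hm' hn'; rewrite -bh (t_br hm hn hm' hn') hN hZ.
Qed.
End TensorRelations.

Lemma tensor_uniq (F : fieldType) (M N T T' : sLie F) (actMN : M -> N -> N)
  (actNM : N -> M -> M) (t : M -> N -> T) (g g' : T -> T') :
  is_tensor actMN actNM t -> is_sLie T' -> is_sLie_hom g -> is_sLie_hom g' ->
  (forall a b m n, sl_hom M a m -> sl_hom N b n -> g (t m n) = g' (t m n)) ->
  forall x, g x = g' x.
Proof.
case=> HT Hr U HT' hg hg' e x.
have [f [_ _ uf]] := U T' (fun m n => g (t m n)) HT' (rels_comp Hr hg).
rewrite (uf g hg) // (uf g' hg') // => a b m n hm hn; by rewrite (e a b).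
Qed.

(* The tensor product is generated by its symbols: the elements reachable from
   them by linear combinations and brackets of homogeneous elements form a
   Lie subsuperalgebra S; initiality gives a section T -> S of the inclusion,
   which is the identity by uniqueness. *)
Section Generation.
Variable F : fieldType.
Variables M N T : sLie F.
Variables (actMN : M -> N -> N) (actNM : N -> M -> M) (t : M -> N -> T).
Hypotheses (HM : is_sLie M) (HN : is_sLie N) (HT : is_tensor actMN actNM t).
Hypothesis pMN : forall a b m n, sl_hom M a m -> sl_hom N b n -> sl_hom N (a (+) b) (actMN m n).
Hypothesis pNM : forall a b n m, sl_hom N a n -> sl_hom M b m -> sl_hom M (a (+) b) (actNM n m).

Let HTL : is_sLie T. Proof. by case: HT. Qed.
Let Hr : tensor_rels actMN actNM t. Proof. by case: HT. Qed.

Inductive gen : T -> Prop :=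
| gen_t a b m n : sl_hom M a m -> sl_hom N b n -> gen (t m n)
| gen0 : gen 0
| gen_lin (k : F) x y : gen x -> gen y -> gen (k *: x + y)
| gen_br a b x y : sl_hom T a x -> sl_hom T b y -> gen x -> gen y -> gen (sl_br T x y).

Lemma genD x y : gen x -> gen y -> gen (x + y).
Proof. by move=> hx hy; have := gen_lin 1 hx hy; rewrite scale1r. Qed.

Lemma gen_graded x : gen x ->
  exists x0 x1, [/\ gen x0, gen x1, sl_hom T false x0, sl_hom T true x1 & x = x0 + x1].
Proof.
have split_hom b y : sl_hom T b y -> gen y -> exists y0 y1,
    [/\ gen y0, gen y1, sl_hom T false y0, sl_hom T true y1 & y = y0 + y1].
  case: b => hy gy; [exists 0, y; rewrite add0r | exists y, 0; rewrite addr0].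
    by split => //; [exact: gen0 | exact: hom0 HTL false].
  by split => //; [exact: gen0 | exact: hom0 HTL true].
elim=> {x}.
- by move=> a b m n hm hn; apply: (split_hom _ _ (t_hom Hr hm hn)); exact: gen_t hm hn.
- by apply: (split_hom false); [exact: hom0 HTL false | exact: gen0].
- move=> k x y _ [x0 [x1 [gx0 gx1 hx0 hx1 ->]]] _ [y0 [y1 [gy0 gy1 hy0 hy1 ->]]].
  exists (k *: x0 + y0), (k *: x1 + y1); split; try exact: gen_lin.
  + exact (homL HTL k hx0 hy0).
  + exact (homL HTL k hx1 hy1).
  + by rewrite scalerDr addrACA.
- move=> a b x y hx hy gx _ gy _.
  by apply: (split_hom _ _ (br_hom HTL hx hy)); exact: gen_br hx hy gx gy.
Qed.

Lemma gen_br_any x y : gen x -> gen y -> gen (sl_br T x y).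
Proof.
move=> /gen_graded [x0 [x1 [gx0 gx1 hx0 hx1 ->]]] /gen_graded [y0 [y1 [gy0 gy1 hy0 hy1 ->]]].
by rewrite !(brDl HTL, brDr HTL); apply: genD; apply: genD; apply: gen_br; eassumption.
Qed.

Definition genb : {pred T} := fun x => `[< gen x >].
Lemma genb_closed : GRing.submod_closed genb.
Proof.
split; first by apply/asboolP; exact: gen0.
by move=> k x y /asboolP hx /asboolP hy; apply/asboolP; exact: gen_lin.
Qed.
HB.instance Definition _ := GRing.isSubmodClosed.Build F T genb genb_closed.
HB.instance Definition _ := [SubChoice_isSubLmodule of {x : T | genb x} by <:].

Local Notation S := {x : T | genb x}.

Lemma genbP (x : S) : gen (val x).
Proof. exact/asboolP/(valP x). Qed.

Definition gen_bracket (x y : S) : S :=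
  Sub (sl_br T (val x) (val y)) (asboolT (gen_br_any (genbP x) (genbP y))).

Definition gen_sLie : sLie F :=
  @SLie F S (fun b x => sl_hom T b (val x)) gen_bracket.

Lemma val_bracket (x y : S) : val (gen_bracket x y) = sl_br T (val x) (val y).
Proof. by rewrite /gen_bracket SubK. Qed.

Lemma gen_sLie_Lie : is_sLie gen_sLie.
Proof.
split; first by move=> b; exact (hom0 HTL b).
split; first by move=> b k x y /= hx hy; exact (homL HTL k hx hy).
split.
  move=> x; have [x0 [x1 [gx0 gx1 hx0 hx1 ex]]] := gen_graded (genbP x).
  exists (Sub x0 (asboolT gx0)), (Sub x1 (asboolT gx1)); split => /=; rewrite ?SubK //.
  by apply: val_inj; rewrite /= ?SubK.
split; first by move=> x /= h0 h1; apply: val_inj; exact (hom01 HTL h0 h1).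
split.
  split=> [v|u] k x y; apply: val_inj; rewrite /= ?val_bracket /=.
  - by rewrite (brDl HTL) (brZl HTL).
  - by rewrite (brDr HTL) (brZr HTL).
split; first by move=> a b x y /= hx hy; rewrite ?val_bracket; exact (br_hom HTL hx hy).
split.
  by move=> a b x y /= hx hy; apply: val_inj; rewrite /= ?val_bracket; exact (br_skew HTL hx hy).
move=> a b c x y z /= hx hy hz; apply: val_inj; rewrite /= ?val_bracket.
exact (jacobi HTL hx hy hz).
Qed.

Definition gen_t_map (m : M) (n : N) : S := insubd 0 (t m n).

Lemma val_gen_t a b m n : sl_hom M a m -> sl_hom N b n -> val (gen_t_map m n) = t m n.
Proof. by move=> hm hn; rewrite /gen_t_map insubdK //; apply/asboolP; exact (gen_t hm hn). Qed.

Lemma gen_t_rels : tensor_rels actMN actNM (gen_t_map : M -> N -> gen_sLie).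
Proof.
have vt := val_gen_t.
split; first by move=> a b m n hm hn /=; rewrite (vt _ _ _ _ hm hn); exact (t_hom Hr hm hn).
split.
  move=> a b k m n hm hn; split; apply: val_inj => /=.
  - by rewrite (vt _ _ _ _ (homZ HM k hm) hn) (vt _ _ _ _ hm hn) (t_Zl Hr k hm hn).
  - by rewrite (vt _ _ _ _ hm (homZ HN k hn)) (vt _ _ _ _ hm hn) (t_Zr Hr k hm hn).
split.
  move=> a b m m' n hm hm' hn; apply: val_inj => /=.
  by rewrite (vt _ _ _ _ (homD HM hm hm') hn) (vt _ _ _ _ hm hn) (vt _ _ _ _ hm' hn) (t_Dl Hr hm hm' hn).
split.
  move=> a b m n n' hm hn hn'; apply: val_inj => /=.
  by rewrite (vt _ _ _ _ hm (homD HN hn hn')) (vt _ _ _ _ hm hn) (vt _ _ _ _ hm hn') (t_Dr Hr hm hn hn').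
split.
  move=> a a' b m m' n hm hm' hn; apply: val_inj => /=.
  rewrite (vt _ _ _ _ (br_hom HM hm hm') hn) (vt _ _ _ _ hm (pMN hm' hn)).
  by rewrite (vt _ _ _ _ hm' (pMN hm hn)); exact (t_brl Hr hm hm' hn).
split.
  move=> a b c m n n' hm hn hn'; apply: val_inj => /=.
  rewrite (vt _ _ _ _ hm (br_hom HN hn hn')) (vt _ _ _ _ (pNM hn' hm) hn).
  by rewrite (vt _ _ _ _ (pNM hn hm) hn'); exact (t_brr Hr hm hn hn').
move=> a b a' b' m n m' n' hm hn hm' hn'; apply: val_inj => /=.
rewrite ?val_bracket /= (vt _ _ _ _ hm hn) (vt _ _ _ _ hm' hn').
by rewrite (vt _ _ _ _ (pNM hn hm) (pMN hm' hn')); exact (t_br Hr hm hn hm' hn').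
Qed.

Lemma val_hom : is_sLie_hom (fun x : gen_sLie => val x).
Proof. by split => // x y /=; rewrite val_bracket. Qed.

Lemma gen_all x : gen x.
Proof.
case: HT => _ _ U.
have [f [hf ft _]] := U gen_sLie gen_t_map gen_sLie_Lie gen_t_rels.
have e : forall x, val (f x) = x.
  apply: (tensor_uniq HT HTL (comp_hom hf val_hom) (id_hom T)) => a b m n hm hn /=.
  by rewrite (ft _ _ _ _ hm hn) (val_gen_t hm hn).
rewrite -(e x); exact: genbP.
Qed.
End Generation.

Lemma tensor_ind (F : fieldType) (M N T : sLie F)
  (actMN : M -> N -> N) (actNM : N -> M -> M) (t : M -> N -> T) :
  is_sLie M -> is_sLie N -> is_tensor actMN actNM t ->
  (forall a b m n, sl_hom M a m -> sl_hom N b n -> sl_hom N (a (+) b) (actMN m n)) ->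
  (forall a b n m, sl_hom N a n -> sl_hom M b m -> sl_hom M (a (+) b) (actNM n m)) ->
  forall P : T -> Prop,
  (forall a b m n, sl_hom M a m -> sl_hom N b n -> P (t m n)) ->
  P 0 -> (forall k x y, P x -> P y -> P (k *: x + y)) ->
  (forall a b x y, sl_hom T a x -> sl_hom T b y -> P x -> P y -> P (sl_br T x y)) ->
  forall x, P x.
Proof.
move=> HM HN HT pMN pNM P Pt P0 Plin Pbr x.
by elim: (gen_all HM HN HT pMN pNM x) => //; eauto.
Qed.

(* Symmetry of the tensor product: (n, m) |-> -(-1)^{|n||m|} m (x) n satisfies
   the relations of N (x) M.  Hence any symbol of M (x) N whose mirror symbol
   vanishes in N (x) M vanishes itself. *)
Section Symmetry.
Variable F : fieldType.
Local Notation s := (sgn F).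
Variables M N T : sLie F.
Variables (actMN : M -> N -> N) (actNM : N -> M -> M) (t : M -> N -> T).
Hypotheses (HM : is_sLie M) (HN : is_sLie N) (HT : is_tensor actMN actNM t).
Hypothesis pMN : forall a b m n, sl_hom M a m -> sl_hom N b n -> sl_hom N (a (+) b) (actMN m n).
Hypothesis pNM : forall a b n m, sl_hom N a n -> sl_hom M b m -> sl_hom M (a (+) b) (actNM n m).

Let HTL : is_sLie T. Proof. by case: HT. Qed.
Let Hr : tensor_rels actMN actNM t. Proof. by case: HT. Qed.

Lemma t0r a m : sl_hom M a m -> t m 0 = 0.
Proof. by move=> hm; have := t_Zr Hr 0 hm (hom0 HN false); rewrite scaler0 scale0r. Qed.
Lemma t0l b n : sl_hom N b n -> t 0 n = 0.
Proof. by move=> hn; have := t_Zl Hr 0 (hom0 HM false) hn; rewrite scaler0 scale0r. Qed.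

(* The parity of an element; meaningful only for nonzero homogeneous ones. *)
Definition parity (A : sLie F) (x : A) : bool := `[< sl_hom A true x >].

Lemma parity_eq (A : sLie F) (HA : is_sLie A) b (x : A) :
  sl_hom A b x -> x <> 0 -> parity x = b.
Proof.
rewrite /parity => hx nx; case: b hx => hx; first by apply/asboolP.
by apply/asboolP => h1; exact: nx (hom01 HA hx h1).
Qed.

Definition swap_t (n : N) (m : M) : T := - (s (parity n) (parity m) *: t m n).

Lemma swap_tE a b n m : sl_hom N b n -> sl_hom M a m -> swap_t n m = - (s b a *: t m n).
Proof.
move=> hn hm; rewrite /swap_t.
have [->|nn] := eqVneq n 0; first by rewrite (t0r hm) !scaler0.
have [->|nm] := eqVneq m 0; first by rewrite (t0l hn) !scaler0.
by rewrite (parity_eq HN hn (elimN eqP nn)) (parity_eq HM hm (elimN eqP nm)).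
Qed.

Lemma swap_rels : tensor_rels actNM actMN swap_t.
Proof.
have uE := swap_tE.
split.
  move=> b a n m hn hm; rewrite (uE _ _ _ _ hn hm); apply: (homN HTL); apply: (homZ HTL).
  by rewrite addbC; exact (t_hom Hr hm hn).
split.
  move=> b a k n m hn hm; rewrite (uE _ _ _ _ (homZ HN k hn) hm) (uE _ _ _ _ hn (homZ HM k hm)).
  rewrite (uE _ _ _ _ hn hm) (t_Zl Hr k hm hn) (t_Zr Hr k hm hn).
  by rewrite !scalerN !scalerA mulrC.
split.
  move=> b a n n' m hn hn' hm.
  rewrite (uE _ _ _ _ (homD HN hn hn') hm) (uE _ _ _ _ hn hm) (uE _ _ _ _ hn' hm).
  by rewrite (t_Dr Hr hm hn hn') scalerDr opprD.
split.
  move=> b a n m m' hn hm hm'.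
  rewrite (uE _ _ _ _ hn (homD HM hm hm')) (uE _ _ _ _ hn hm) (uE _ _ _ _ hn hm').
  by rewrite (t_Dl Hr hm hm' hn) scalerDr opprD.
split.
  move=> b b' a n n' m hn hn' hm.
  rewrite (uE _ _ _ _ (br_hom HN hn hn') hm) (uE _ _ _ _ hn (pNM hn' hm)).
  rewrite (uE _ _ _ _ hn' (pNM hn hm)) (t_brr Hr hm hn hn').
  rewrite scalerBr !scalerN !scalerA opprB opprK addrC -!scaleNr.
  by congr (_ *: _ + _ *: _); rewrite /sgn; destruct a, b, b'; simpl; ring.
split.
  move=> b a a' n m m' hn hm hm'.
  rewrite (uE _ _ _ _ hn (br_hom HM hm hm')) (uE _ _ _ _ (pMN hm' hn) hm).
  rewrite (uE _ _ _ _ (pMN hm hn) hm') (t_brl Hr hm hm' hn).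
  rewrite scalerBr !scalerN !scalerA opprB !opprK addrC -!scaleNr.
  by congr (_ *: _ + _ *: _); rewrite /sgn; destruct a, b, a'; simpl; ring.
move=> b a b' a' n m n' m' hn hm hn' hm'.
rewrite (uE _ _ _ _ hn hm) (uE _ _ _ _ hn' hm') (uE _ _ _ _ (pMN hm hn) (pNM hn' hm')).
rewrite (brNl HTL) (brNr HTL) opprK (brZl HTL) (brZr HTL).
rewrite (br_skew HTL (t_hom Hr hm hn) (t_hom Hr hm' hn')) (t_br Hr hm' hn' hm hn).
rewrite !scalerN !opprK !scalerA.
by congr (_ *: _); rewrite /sgn; destruct a, b, a', b'; simpl; ring.
Qed.

Lemma swap_zero (T' : sLie F) (t' : N -> M -> T') : is_tensor actNM actMN t' ->
  forall a b m n, sl_hom M a m -> sl_hom N b n -> t' n m = 0 -> t m n = 0.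
Proof.
case=> _ _ U a b m n hm hn e.
have [f [[lf _ _] ft _]] := U T swap_t HTL swap_rels.
have := ft _ _ _ _ hn hm; rewrite e (lin0 lf) (swap_tE hn hm).
by move/eqP; rewrite eq_sym oppr_eq0 => /eqP; exact: sgnZ_eq0.
Qed.
End Symmetry.

Section Action.
Variable F : fieldType.
Local Notation s := (sgn F).
Variables (P M : sLie F) (act : P -> M -> M).
Hypothesis Ha : is_action act.

Lemma act_hom a b p m : sl_hom P a p -> sl_hom M b m -> sl_hom M (a (+) b) (act p m).
Proof. by case: Ha => _ h _ _; apply: h. Qed.
Lemma act_brl a a' p p' m : sl_hom P a p -> sl_hom P a' p' ->
  act (sl_br P p p') m = act p (act p' m) - s a a' *: act p' (act p m).
Proof. by case: Ha => _ _ h _; apply: h. Qed.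
Lemma act_der a b p m m' : sl_hom P a p -> sl_hom M b m ->
  act p (sl_br M m m') = sl_br M (act p m) m' + s a b *: sl_br M m (act p m').
Proof. by case: Ha => _ _ _ h; apply: h. Qed.
Lemma act_linl m : linear_map (fun p => act p m).
Proof. by case: Ha => [[h _] _ _ _]; apply: h. Qed.
Lemma act_linr p : linear_map (act p).
Proof. by case: Ha => [[_ h] _ _ _]; apply: h. Qed.
Lemma actDl p p' m : act (p + p') m = act p m + act p' m.
Proof. exact: (linD (act_linl m)). Qed.
Lemma actDr p m m' : act p (m + m') = act p m + act p m'.
Proof. exact: (linD (act_linr p)). Qed.
Lemma actZl k p m : act (k *: p) m = k *: act p m.
Proof. exact: (linZ (act_linl m)). Qed.
Lemma actZr k p m : act p (k *: m) = k *: act p m.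
Proof. exact: (linZ (act_linr p)). Qed.
Lemma act0l m : act 0 m = 0.
Proof. exact: (lin0 (act_linl m)). Qed.
Lemma act0r p : act p 0 = 0.
Proof. exact: (lin0 (act_linr p)). Qed.

Lemma act_span1 p m : act_span act (act p m).
Proof. by exists [:: (1, p, m)]; rewrite big_seq1 scale1r. Qed.
End Action.

Lemma tensor_centralizer (F : fieldType) (M N A T : sLie F)
  (actMN : M -> N -> N) (actNM : N -> M -> M) (t : M -> N -> A) (g : A -> T) c z :
  is_sLie M -> is_sLie N -> is_tensor actMN actNM t ->
  (forall a b m n, sl_hom M a m -> sl_hom N b n -> sl_hom N (a (+) b) (actMN m n)) ->
  (forall a b n m, sl_hom N a n -> sl_hom M b m -> sl_hom M (a (+) b) (actNM n m)) ->
  is_sLie T -> is_sLie_hom g -> sl_hom T c z ->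
  (forall a b m n, sl_hom M a m -> sl_hom N b n -> sl_br T (g (t m n)) z = 0) ->
  forall x, sl_br T (g x) z = 0.
Proof.
move=> HM HN HA pMN pNM HT [lg pg bg] hz gen_z.
apply: (tensor_ind HM HN HA pMN pNM) => //.
- by rewrite (lin0 lg) (br0l HT).
- by move=> k x y ex ey; rewrite lg (brDl HT) (brZl HT) ex ey scaler0 addr0.
- move=> a b x y hx hy ex ey; rewrite bg.
  exact: (centralizer_br HT (pg _ _ hx) (pg _ _ hy) hz ex ey).
Qed.

Section CommutingImages.
Variable F : fieldType.
Variables M1 M2 N A1 A2 T : sLie F.
Variables (act1 : M1 -> N -> N) (act1' : N -> M1 -> M1) (t1 : M1 -> N -> A1).
Variables (act2 : M2 -> N -> N) (act2' : N -> M2 -> M2) (t2 : M2 -> N -> A2).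
Hypotheses (HM1 : is_sLie M1) (HM2 : is_sLie M2) (HN : is_sLie N) (HT : is_sLie T).
Hypotheses (HA1 : is_tensor act1 act1' t1) (HA2 : is_tensor act2 act2' t2).
Hypothesis p1 : forall a b m n, sl_hom M1 a m -> sl_hom N b n -> sl_hom N (a (+) b) (act1 m n).
Hypothesis p1' : forall a b n m, sl_hom N a n -> sl_hom M1 b m -> sl_hom M1 (a (+) b) (act1' n m).
Hypothesis p2 : forall a b m n, sl_hom M2 a m -> sl_hom N b n -> sl_hom N (a (+) b) (act2 m n).
Hypothesis p2' : forall a b n m, sl_hom N a n -> sl_hom M2 b m -> sl_hom M2 (a (+) b) (act2' n m).
Variables (g1 : A1 -> T) (g2 : A2 -> T).
Hypotheses (hg1 : is_sLie_hom g1) (hg2 : is_sLie_hom g2).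
Hypothesis gen_commute : forall a b a' b' m n m' n',
  sl_hom M1 a m -> sl_hom N b n -> sl_hom M2 a' m' -> sl_hom N b' n' ->
  sl_br T (g1 (t1 m n)) (g2 (t2 m' n')) = 0.

Let HA1L : is_sLie A1. Proof. by case: HA1. Qed.
Let HA2L : is_sLie A2. Proof. by case: HA2. Qed.
Let Hr1 : tensor_rels act1 act1' t1. Proof. by case: HA1. Qed.
Let Hr2 : tensor_rels act2 act2' t2. Proof. by case: HA2. Qed.
Let pg1 : forall b x, sl_hom A1 b x -> sl_hom T b (g1 x). Proof. by case: hg1. Qed.
Let pg2 : forall b x, sl_hom A2 b x -> sl_hom T b (g2 x). Proof. by case: hg2. Qed.

(* First induct over A2 with a fixed symbol of A1, then over A1. *)
Lemma images_commute_hom c w u : sl_hom A2 c w -> sl_br T (g1 u) (g2 w) = 0.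
Proof.
move=> hw; move: u; apply: (tensor_centralizer HM1 HN HA1 p1 p1' HT hg1 (pg2 hw)).
move=> a b m n hm hn; have hz := pg1 (t_hom Hr1 hm hn).
apply: (br_eq0_swap HT (pg2 hw) hz); clear hw; move: w.
apply: (tensor_centralizer HM2 HN HA2 p2 p2' HT hg2 hz) => a' b' m' n' hm' hn'.
exact: (br_eq0_swap HT hz (pg2 (t_hom Hr2 hm' hn')) (gen_commute hm hn hm' hn')).
Qed.

Lemma images_commute u v : sl_br T (g1 u) (g2 v) = 0 /\ sl_br T (g2 v) (g1 u) = 0.
Proof.
have [lg1 _ _] := hg1; have [lg2 _ _] := hg2.
have [v0 [v1 [hv0 hv1 ->]]] := decomp HA2L v.
have [u0 [u1 [hu0 hu1 ->]]] := decomp HA1L u.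
have swap c c' x y : sl_hom A1 c x -> sl_hom A2 c' y -> sl_br T (g2 y) (g1 x) = 0.
  by move=> hx hy; exact: (br_eq0_swap HT (pg1 hx) (pg2 hy) (images_commute_hom _ hy)).
rewrite (linD lg1) (linD lg2) !(brDl HT, brDr HT).
rewrite !(images_commute_hom _ hv0, images_commute_hom _ hv1).
by rewrite (swap _ _ _ _ hu0 hv0) (swap _ _ _ _ hu1 hv0) (swap _ _ _ _ hu0 hv1)
  (swap _ _ _ _ hu1 hv1) !addr0.
Qed.
End CommutingImages.

Section SumActions.
Variable F : fieldType.
Local Notation s := (sgn F).
Variables L M N : sLie F.
Hypothesis HN : is_sLie N.
Variables (actLN : L -> N -> N) (actNL : N -> L -> L)
  (actMN : M -> N -> N) (actNM : N -> M -> M).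
Hypotheses (aLN : is_action actLN) (aNL : is_action actNL)
  (aMN : is_action actMN) (aNM : is_action actNM).
Hypothesis hii : forall a b c (l : L) (m : M) (n : N),
      sl_hom L a l -> sl_hom M b m -> sl_hom N c n ->
      actLN l (actMN m n) = sgn F a b *: actMN m (actLN l n).

Lemma act_supercommute a b (l : L) (m : M) (n : N) : sl_hom L a l -> sl_hom M b m ->
  actLN l (actMN m n) = s a b *: actMN m (actLN l n).
Proof.
move=> hl hm; have [n0 [n1 [h0 h1 ->]]] := decomp HN n.
by rewrite !(actDr aMN, actDr aLN) (hii hl hm h0) (hii hl hm h1) scalerDr.
Qed.

Lemma sumL_action : is_action (sum_act_l actLN actMN).
Proof.
rewrite /sum_act_l; split.
- split => [n | lm] k x y /=.
  + by rewrite (actDl aLN) (actZl aLN) (actDl aMN) (actZl aMN) scalerDr addrACA.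
  + by rewrite (actDr aLN) (actZr aLN) (actDr aMN) (actZr aMN) scalerDr addrACA.
- move=> a b [l m] n [hl hm] hn /=.
  by apply: (homD HN); [exact (act_hom aLN hl hn) | exact (act_hom aMN hm hn)].
- move=> a a' [l m] [l' m'] n [hl hm] [hl' hm'] /=.
  rewrite (act_brl aLN _ hl hl') (act_brl aMN _ hm hm').
  rewrite !(actDr aLN, actDr aMN) (act_supercommute _ hl hm') (act_supercommute _ hl' hm).
  rewrite !scalerDr scalerA (sgnC _ a' a) sgnK scale1r.
  (* the mixed terms ^l ^m' n and ^m ^l' n cancel in pairs *)
  rewrite /= !opprD !addrA [RHS](ACl ((1*5*4*8)*((2*7)*(3*6)))) /=.
  by rewrite !subrr !addr0.
- move=> a b [l m] n n' [hl hm] hn /=.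
  rewrite (act_der aLN _ hl hn) (act_der aMN _ hm hn) (brDl HN) (brDr HN) scalerDr.
  by rewrite addrACA.
Qed.

Lemma sumR_action : is_action (sum_act_r actNL actNM).
Proof.
rewrite /sum_act_r; split.
- split => [lm | n] k x y; apply: pairE => /=.
  + by rewrite (actDl aNL) (actZl aNL).
  + by rewrite (actDl aNM) (actZl aNM).
  + by rewrite (actDr aNL) (actZr aNL).
  + by rewrite (actDr aNM) (actZr aNM).
- move=> a b n [l m] hn [hl hm]; split; [exact (act_hom aNL hn hl)|exact (act_hom aNM hn hm)].
- move=> a a' n n' [l m] hn hn'; apply: pairE => /=.
  + exact (act_brl aNL _ hn hn').
  + exact (act_brl aNM _ hn hn').
- move=> a b n [l m] [l' m'] hn [hl hm]; apply: pairE => /=.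
  + exact (act_der aNL _ hn hl).
  + exact (act_der aNM _ hn hm).
Qed.
End SumActions.

Section RelationsAlong.
Variable F : fieldType.
Variables P Q N T : sLie F.
Variables (actPN : P -> N -> N) (actNP : N -> P -> P).
Variables (actQN : Q -> N -> N) (actNQ : N -> Q -> Q).
Variables (t : P -> N -> T) (phi : Q -> P).
Hypotheses (Ht : tensor_rels actPN actNP t) (hphi : is_sLie_hom phi).
Hypothesis pNQ : forall a b n q, sl_hom N a n -> sl_hom Q b q -> sl_hom Q (a (+) b) (actNQ n q).
Hypothesis act_comm : forall n q, actNP n (phi q) = phi (actNQ n q).
Hypothesis act_cross : forall a b c x q n, sl_hom P a x -> sl_hom Q b q -> sl_hom N c n ->
  t x (actPN (phi q) n) = t x (actQN q n).

Lemma rels_along : tensor_rels actQN actNQ (fun q n => t (phi q) n).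
Proof.
have [lphi pphi bphi] := hphi.
split; first by move=> a b q n hq hn; exact (t_hom Ht (pphi _ _ hq) hn).
split.
  move=> a b k q n hq hn; rewrite (linZ lphi).
  by split; [exact (t_Zl Ht k (pphi _ _ hq) hn) | exact (t_Zr Ht k (pphi _ _ hq) hn)].
split.
  by move=> a b q q' n hq hq' hn; rewrite (linD lphi) (t_Dl Ht (pphi _ _ hq) (pphi _ _ hq') hn).
split; first by move=> a b q n n' hq hn hn'; exact (t_Dr Ht (pphi _ _ hq) hn hn').
split.
  move=> a a' b q q' n hq hq' hn; rewrite bphi (t_brl Ht (pphi _ _ hq) (pphi _ _ hq') hn).
  by rewrite (act_cross (pphi _ _ hq) hq' hn) (act_cross (pphi _ _ hq') hq hn).
split.
  by move=> a b c q n n' hq hn hn'; rewrite (t_brr Ht (pphi _ _ hq) hn hn') !act_comm.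
move=> a b a' b' q n q' n' hq hn hq' hn'.
rewrite (t_br Ht (pphi _ _ hq) hn (pphi _ _ hq') hn') act_comm.
by rewrite (act_cross (pphi _ _ (pNQ hn hq)) hq' hn').
Qed.
End RelationsAlong.

Lemma pair_rels (F : fieldType) (P N A B : sLie F)
  (actPN : P -> N -> N) (actNP : N -> P -> P) (tA : P -> N -> A) (tB : P -> N -> B) :
  tensor_rels actPN actNP tA -> tensor_rels actPN actNP tB ->
  tensor_rels actPN actNP (fun p n => (tA p n, tB p n) : sLie_sum A B).
Proof.
move=> HA HB.
split; first by move=> a b p n hp hn; split; [exact (t_hom HA hp hn) | exact (t_hom HB hp hn)].
split.
  move=> a b k p n hp hn.
  by split; apply: pairE => /=; rewrite ?(t_Zl HA k hp hn) ?(t_Zl HB k hp hn)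
    ?(t_Zr HA k hp hn) ?(t_Zr HB k hp hn).
split.
  move=> a b p p' n hp hp' hn.
  by apply: pairE; rewrite /= ?(t_Dl HA hp hp' hn) ?(t_Dl HB hp hp' hn).
split.
  move=> a b p n n' hp hn hn'.
  by apply: pairE; rewrite /= ?(t_Dr HA hp hn hn') ?(t_Dr HB hp hn hn').
split.
  move=> a a' b p p' n hp hp' hn.
  by apply: pairE; rewrite /= ?(t_brl HA hp hp' hn) ?(t_brl HB hp hp' hn).
split.
  move=> a b c p n n' hp hn hn'.
  by apply: pairE; rewrite /= ?(t_brr HA hp hn hn') ?(t_brr HB hp hn hn').
move=> a b a' b' p n p' n' hp hn hp' hn'.
by apply: pairE; rewrite /= ?(t_br HA hp hn hp' hn') ?(t_br HB hp hn hp' hn').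
Qed.

Section Main.
Variable F : fieldType.
Variables L M N : sLie F.
Hypotheses (HL : is_sLie L) (HM : is_sLie M) (HN : is_sLie N).
Variables (actLN : L -> N -> N) (actNL : N -> L -> L)
  (actMN : M -> N -> N) (actNM : N -> M -> M).
Hypotheses (aLN : is_action actLN) (aNL : is_action actNL)
  (aMN : is_action actMN) (aNM : is_action actNM).
Variables (TNM : sLie F) (tNM : N -> M -> TNM) (TNL : sLie F) (tNL : N -> L -> TNL).
Hypotheses (HTNM : is_tensor actNM actMN tNM) (HTNL : is_tensor actNL actLN tNL).
Hypothesis hiii1 : forall a b (x : N) (m : M), act_span actLN x ->
      sl_hom N a x -> sl_hom M b m -> tNM x m = 0.
Hypothesis hiii2 : forall a b (x : N) (l : L), act_span actMN x ->
      sl_hom N a x -> sl_hom L b l -> tNL x l = 0.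
Variables (T1 : sLie F) (t1 : L -> N -> T1) (T2 : sLie F) (t2 : M -> N -> T2).
Hypotheses (HT1 : is_tensor actLN actNL t1) (HT2 : is_tensor actMN actNM t2).
Variables (T : sLie F) (t : sLie_sum L M -> N -> T).
Hypothesis HT : is_tensor (sum_act_l actLN actMN) (sum_act_r actNL actNM) t.

Local Notation P := (sLie_sum L M).
Local Notation S12 := (sLie_sum T1 T2).
Local Notation actPN := (sum_act_l actLN actMN).
Local Notation actNP := (sum_act_r actNL actNM).

Let HT1L : is_sLie T1. Proof. by case: HT1. Qed.
Let HT2L : is_sLie T2. Proof. by case: HT2. Qed.
Let HTL : is_sLie T. Proof. by case: HT. Qed.
Let Hr1 : tensor_rels actLN actNL t1. Proof. by case: HT1. Qed.
Let Hr2 : tensor_rels actMN actNM t2. Proof. by case: HT2. Qed.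
Let Hr : tensor_rels actPN actNP t. Proof. by case: HT. Qed.

(* By hypothesis (iii) and symmetry, the cross terms vanish. *)
Lemma cross_LM a a' b (l : L) (m : M) (n : N) :
  sl_hom L a l -> sl_hom M a' m -> sl_hom N b n -> t1 l (actMN m n) = 0.
Proof.
move=> hl hm hn; have hmn := act_hom aMN hm hn.
apply: (swap_zero HL HN HT1 (act_hom aLN) (act_hom aNL) HTNL hl hmn).
exact: (hiii2 (act_span1 _ _ _) hmn hl).
Qed.

Lemma cross_ML a a' b (m : M) (l : L) (n : N) :
  sl_hom M a m -> sl_hom L a' l -> sl_hom N b n -> t2 m (actLN l n) = 0.
Proof.
move=> hm hl hn; have hln := act_hom aLN hl hn.
apply: (swap_zero HM HN HT2 (act_hom aMN) (act_hom aNM) HTNM hm hln).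
exact: (hiii1 (act_span1 _ _ _) hln hm).
Qed.

Lemma hom_inl a (l : L) : sl_hom L a l -> sl_hom P a ((l, 0) : P).
Proof. by split => //; exact: hom0. Qed.
Lemma hom_inr a (m : M) : sl_hom M a m -> sl_hom P a ((0, m) : P).
Proof. by split => //; exact: hom0. Qed.

Let pNP := act_hom (sumR_action aNL aNM).

Lemma proj1_rels : tensor_rels actPN actNP (fun p n => t1 p.1 n).
Proof.
apply: (rels_along Hr1 (@fst_hom F L M) pNP) => // a b c x [l m] n hx [hl hm] hn.
by rewrite /sum_act_l /= (t_Dr Hr1 hx (act_hom aLN hl hn) (act_hom aMN hm hn))
  (cross_LM hx hm hn) addr0.
Qed.

Lemma proj2_rels : tensor_rels actPN actNP (fun p n => t2 p.2 n).
Proof.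
apply: (rels_along Hr2 (@snd_hom F L M) pNP) => // a b c x [l m] n hx [hl hm] hn.
by rewrite /sum_act_l /= (t_Dr Hr2 hx (act_hom aLN hl hn) (act_hom aMN hm hn))
  (cross_ML hx hl hn) add0r.
Qed.

Lemma inl_rels : tensor_rels actLN actNL (fun l n => t ((l, 0) : P) n).
Proof.
apply: (rels_along Hr (inl_hom _ HM) (act_hom aNL)).
- by move=> n l; rewrite /sum_act_r /= (act0r aNM).
- by move=> a b c x l n _ _ _; rewrite /sum_act_l /= (act0l aMN) addr0.
Qed.

Lemma inr_rels : tensor_rels actMN actNM (fun m n => t ((0, m) : P) n).
Proof.
apply: (rels_along Hr (inr_hom _ HL) (act_hom aNM)).
- by move=> n m; rewrite /sum_act_r /= (act0r aNL).
- by move=> a b c x m n _ _ _; rewrite /sum_act_l /= (act0l aLN) add0r.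
Qed.

Section Inverse.
Variables (f : T -> S12) (g1 : T1 -> T) (g2 : T2 -> T).
Hypotheses (hf : is_sLie_hom f) (hg1 : is_sLie_hom g1) (hg2 : is_sLie_hom g2).
Hypothesis f_t : forall a b (p : P) n, sl_hom P a p -> sl_hom N b n ->
  f (t p n) = (t1 p.1 n, t2 p.2 n).
Hypothesis g1_t : forall a b l n, sl_hom L a l -> sl_hom N b n -> g1 (t1 l n) = t (l, 0) n.
Hypothesis g2_t : forall a b m n, sl_hom M a m -> sl_hom N b n -> g2 (t2 m n) = t (0, m) n.

(* [(l, 0) (x) n, (0, m) (x) n'] is, up to sign, the image of the cross term
   (^n l) (x) (^m n') of L (x) N. *)
Lemma symbols_commute a b a' b' (l : L) (n : N) (m : M) (n' : N) :
  sl_hom L a l -> sl_hom N b n -> sl_hom M a' m -> sl_hom N b' n' ->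
  sl_br T (g1 (t1 l n)) (g2 (t2 m n')) = 0.
Proof.
move=> hl hn hm hn'; have hnl := act_hom aNL hn hl; have [lg1 _ _] := hg1.
rewrite (g1_t hl hn) (g2_t hm hn') (t_br Hr (hom_inl hl) hn (hom_inr hm) hn').
rewrite /sum_act_r /sum_act_l /= (act0r aNM) (act0l aLN) add0r.
rewrite -(g1_t hnl (act_hom aMN hm hn')) (cross_LM hnl hm hn').
by rewrite (lin0 lg1) scaler0 oppr0.
Qed.

Definition sum_inv (x : S12) : T := g1 x.1 + g2 x.2.

Lemma sum_inv_hom : is_sLie_hom sum_inv.
Proof.
have comm := images_commute HL HM HN HTL HT1 HT2 (act_hom aLN) (act_hom aNL)
  (act_hom aMN) (act_hom aNM) hg1 hg2 symbols_commute.
by apply: sum_hom => // u v; case: (comm u v).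
Qed.

Lemma f_g1 x : f (g1 x) = (x, 0).
Proof.
apply: (tensor_uniq HT1 (sum_Lie HT1L HT2L) (comp_hom hg1 hf) (inl_hom _ HT2L)).
move=> a b l n hl hn /=.
by rewrite (g1_t hl hn) (f_t (hom_inl hl) hn) /= (t0l HM HT2 hn).
Qed.

Lemma f_g2 x : f (g2 x) = (0, x).
Proof.
apply: (tensor_uniq HT2 (sum_Lie HT1L HT2L) (comp_hom hg2 hf) (inr_hom _ HT1L)).
move=> a b m n hm hn /=.
by rewrite (g2_t hm hn) (f_t (hom_inr hm) hn) /= (t0l HL HT1 hn).
Qed.

(* (l, m) (x) n = (l, 0) (x) n + (0, m) (x) n for homogeneous (l, m). *)
Lemma sum_inv_f x : sum_inv (f x) = x.
Proof.
apply: (tensor_uniq HT HTL (comp_hom hf sum_inv_hom) (id_hom T)) => a b [l m] n hp hn /=.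
rewrite (f_t hp hn) /sum_inv /=; case: hp => /= hl hm.
rewrite (g1_t hl hn) (g2_t hm hn) -(t_Dl Hr (hom_inl hl) (hom_inr hm) hn).
by congr (t _ n); apply: pairE; rewrite /= ?addr0 ?add0r.
Qed.

Lemma f_iso : is_sLie_iso f.
Proof.
have [lf _ _] := hf; split => //; exists sum_inv; first exact: sum_inv_f.
case=> x1 x2; rewrite /sum_inv /= (linD lf) f_g1 f_g2.
by apply: pairE; rewrite /= ?addr0 ?add0r.
Qed.
End Inverse.

Lemma main_iso : exists f : T -> S12, is_sLie_iso f /\
  forall a b (l : L) (m : M) (n : N), sl_hom L a l -> sl_hom M a m -> sl_hom N b n ->
    f (t (l, m) n) = (t1 l n, t2 m n).
Proof.
have [_ _ U] := HT.
have [f [hf f_t _]] := U S12 _ (sum_Lie HT1L HT2L) (pair_rels proj1_rels proj2_rels).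
have [_ _ U1] := HT1; have [g1 [hg1 g1_t _]] := U1 T _ HTL inl_rels.
have [_ _ U2] := HT2; have [g2 [hg2 g2_t _]] := U2 T _ HTL inr_rels.
exists f; split; first exact: (f_iso hf hg1 hg2 f_t g1_t g2_t).
move=> a b l m n hl hm hn.
have hp : sl_hom P a ((l, m) : P) by split.
exact: f_t hp hn.
Qed.
End Main.

Theorem mainTheorem9 (F : fieldType)
  (char2 : (2%:R : F) != 0) (char3 : (3%:R : F) != 0)
  (L M N : sLie F) (HL : is_sLie L) (HM : is_sLie M) (HN : is_sLie N)
  (actLN : L -> N -> N) (actNL : N -> L -> L)
  (actMN : M -> N -> N) (actNM : N -> M -> M)
  (aLN : is_action actLN) (aNL : is_action actNL)
  (aMN : is_action actMN) (aNM : is_action actNM)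
  (* (i) *)
  (cLN : compatible actLN actNL) (cMN : compatible actMN actNM)
  (* (ii) *)
  (hii : forall a b c (l : L) (m : M) (n : N),
      sl_hom L a l -> sl_hom M b m -> sl_hom N c n ->
      actLN l (actMN m n) = sgn F a b *: actMN m (actLN l n))
  (* (iii) : N (x) M and N (x) L, and the triviality of the canonical maps *)
  (TNM : sLie F) (tNM : N -> M -> TNM) (HTNM : is_tensor actNM actMN tNM)
  (TNL : sLie F) (tNL : N -> L -> TNL) (HTNL : is_tensor actNL actLN tNL)
  (hiii1 : forall a b (x : N) (m : M), act_span actLN x ->
      sl_hom N a x -> sl_hom M b m -> tNM x m = 0)
  (hiii2 : forall a b (x : N) (l : L), act_span actMN x ->
      sl_hom N a x -> sl_hom L b l -> tNL x l = 0) :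
  is_action (sum_act_l actLN actMN) /\
  is_action (sum_act_r actNL actNM) /\
  forall (T : sLie F) (t : sLie_sum L M -> N -> T)
         (T1 : sLie F) (t1 : L -> N -> T1)
         (T2 : sLie F) (t2 : M -> N -> T2),
    is_tensor (sum_act_l actLN actMN) (sum_act_r actNL actNM) t ->
    is_tensor actLN actNL t1 ->
    is_tensor actMN actNM t2 ->
    exists f : T -> sLie_sum T1 T2,
      is_sLie_iso f /\
      forall a b (l : L) (m : M) (n : N),
        sl_hom L a l -> sl_hom M a m -> sl_hom N b n ->
        f (t (l, m) n) = (t1 l n, t2 m n).
Proof.
split; first exact: (sumL_action HN aLN aMN hii).
split; first exact: (sumR_action aNL aNM).
move=> T t T1 t1 T2 t2 HT HT1 HT2.
exact: (main_iso HL HM HN aLN aNL aMN aNM HTNM HTNL hiii1 hiii2 HT1 HT2 HT).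
Qed.
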